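(* Let $a_1,a_2\in\mathbb{R}^2$, let $e$ be a directed segment in $\mathbb{R}^2$ with supporting line $\ell$ (directed as $e$), and let $\rho>0$. Call the monotonicity predicate true if there exist points $p_1,p_2\in\ell$ with $p_1$ not after $p_2$ in the direction of $e$ such that $\|p_1-a_1\|\le\rho$ and $\|p_2-a_2\|\le\rho$. Consider: (d) $\ell$ intersects the circle of radius $\rho$ centered at $a_1$; (e) $\ell$ intersects the circle of radius $\rho$ centered at $a_2$; (f) the angle between the vector $a_2-a_1$ and the direction of $e$ is at most $\pi/2$; (g) $\|a_1-a_2\|\le 2\rho$. If $(d)\wedge(e)\wedge(f)$ is true, then the monotonicity predicate is true. Furthermore, if (g) is false, or if $\ell$ does not intersect the lens formed by the two closed disks of radius $\rho$ centered at $a_1$ and $a_2$ (their intersection), then $(d)\wedge(e)\wedge(f)$ is equivalent to the monotonicity predicate. *)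

From Stdlib Require Import Reals.
Open Scope R_scope.

Definition pt := (R * R)%type.

Definition vsub (p q : pt) : pt := (fst p - fst q, snd p - snd q).
Definition dot (u v : pt) : R := fst u * fst v + snd u * snd v.
Definition norm (u : pt) : R := sqrt (dot u u).
Definition pdist (p q : pt) : R := norm (vsub p q).

Record dseg := { tail : pt; head : pt }.
Definition dir (e : dseg) : pt := vsub (head e) (tail e).
Definition nondegenerate (e : dseg) : Prop := tail e <> head e.

Definition on_line (e : dseg) (p : pt) : Prop :=
  exists lam : R, p = (fst (tail e) + lam * fst (dir e),
                       snd (tail e) + lam * snd (dir e)).

Definition not_after (e : dseg) (p1 p2 : pt) : Prop :=
  0 <= dot (vsub p2 p1) (dir e).

Definition monotone (a1 a2 : pt) (e : dseg) (rho : R) : Prop :=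
  exists p1 p2 : pt, on_line e p1 /\ on_line e p2 /\ not_after e p1 p2 /\
    pdist p1 a1 <= rho /\ pdist p2 a2 <= rho.

Definition line_meets_circle (e : dseg) (a : pt) (rho : R) : Prop :=
  exists p : pt, on_line e p /\ pdist p a = rho.

Definition angle_le_right (u v : pt) : Prop := 0 <= dot u v.

Definition line_meets_lens (e : dseg) (a1 a2 : pt) (rho : R) : Prop :=
  exists p : pt, on_line e p /\ pdist p a1 <= rho /\ pdist p a2 <= rho.

(* Parametrize the line as [t + l d]. For a centre [a], the squared distance
   to [t + l d] is [|d|^2 (l - c)^2 + h^2], where [c] is the parameter of the
   foot of the perpendicular from [a] and [h] the distance from [a] to the
   line. Hence the line meets the circle of radius [rho] around [a] iff it
   meets the closed disk iff [h <= rho], and the parameters of the points of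
   the disk form an interval around [c]. Angle condition (f) says exactly that
   the foot of [a1] is not after the foot of [a2], so (d), (e) and (f) give
   the two feet as witnesses of monotonicity. Conversely, if witnesses
   [l1 <= l2] exist but the feet are in the wrong order, the point
   [min l2 c1] lies in both disks, so the line meets the lens; and a nonempty
   lens forces [|a1 - a2| <= 2 rho]. *)
From Stdlib Require Import Reals Lra Psatz.
Open Scope R_scope.

Definition sqdist (p q : pt) : R := dot (vsub p q) (vsub p q).

Lemma sqdist_ge0 p q : 0 <= sqdist p q.
Proof. unfold sqdist, dot; nra. Qed.

Lemma pdist_le_iff p q r : 0 <= r -> pdist p q <= r <-> sqdist p q <= r * r.
Proof.
  intro Hr; unfold pdist, norm; fold (sqdist p q); split; intro H.
  - apply sqrt_le_0; [apply sqdist_ge0 | nra |].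
    now rewrite sqrt_square.
  - rewrite <- (sqrt_square r Hr); now apply sqrt_le_1_alt.
Qed.

Lemma pdist_eq_iff p q r : 0 <= r -> pdist p q = r <-> sqdist p q = r * r.
Proof.
  intro Hr; unfold pdist, norm; fold (sqdist p q); split; intro H.
  - symmetry; apply sqrt_lem_0; auto using sqdist_ge0.
  - apply sqrt_lem_1; auto using sqdist_ge0.
Qed.

Lemma sqdist_le_parallelogram p a1 a2 :
  sqdist a1 a2 <= 2 * sqdist p a1 + 2 * sqdist p a2.
Proof.
  destruct p as [x y], a1 as [x1 y1], a2 as [x2 y2].
  unfold sqdist, dot, vsub; simpl.
  pose proof (Rle_0_sqr (2 * x - x1 - x2)); pose proof (Rle_0_sqr (2 * y - y1 - y2)).
  unfold Rsqr in *; nra.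
Qed.

Lemma pdist_le_of_common_disk p a1 a2 r : 0 <= r ->
  pdist p a1 <= r -> pdist p a2 <= r -> pdist a1 a2 <= 2 * r.
Proof.
  intros Hr H1 H2; apply pdist_le_iff in H1, H2; auto.
  apply pdist_le_iff; [lra |].
  pose proof (sqdist_le_parallelogram p a1 a2); nra.
Qed.

Lemma dot_self_gt0 u : u <> (0, 0) -> 0 < dot u u.
Proof.
  destruct u as [x y]; unfold dot; simpl; intro Hu.
  destruct (Req_dec x 0), (Req_dec y 0); [subst; easy | nra ..].
Qed.

Section Line.

Variable e : dseg.
Hypothesis He : nondegenerate e.

Definition line_point (l : R) : pt :=
  (fst (tail e) + l * fst (dir e), snd (tail e) + l * snd (dir e)).

Lemma on_line_point l : on_line e (line_point l).
Proof. now exists l. Qed.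

Lemma dir_sqnorm_gt0 : 0 < dot (dir e) (dir e).
Proof.
  apply dot_self_gt0; intro H0; apply He.
  unfold dir, vsub in H0; injection H0; intros.
  destruct (tail e), (head e); simpl in *; f_equal; lra.
Qed.

Definition foot (a : pt) : R :=
  dot (vsub a (tail e)) (dir e) / dot (dir e) (dir e).

Lemma sqdist_line_point a l :
  sqdist (line_point l) a =
  dot (dir e) (dir e) * ((l - foot a) * (l - foot a))
  + sqdist (line_point (foot a)) a.
Proof.
  pose proof dir_sqnorm_gt0 as Hd.
  unfold sqdist, line_point, foot, dot, vsub in *; simpl in *.
  field; lra.
Qed.

Lemma sqdist_line_point_between a l m :
  l <= m <= foot a \/ foot a <= m <= l ->
  sqdist (line_point m) a <= sqdist (line_point l) a.
Proof.
  intro Hm; rewrite (sqdist_line_point a l), (sqdist_line_point a m).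
  pose proof dir_sqnorm_gt0.
  apply Rplus_le_compat_r, Rmult_le_compat_l; [lra |].
  enough (0 <= (m - l) * (2 * foot a - l - m)) by nra.
  destruct Hm as [Hm | Hm]; [| rewrite <- Rmult_opp_opp]; apply Rmult_le_pos; lra.
Qed.

Lemma sqdist_foot_le a l :
  sqdist (line_point (foot a)) a <= sqdist (line_point l) a.
Proof.
  apply sqdist_line_point_between.
  destruct (Rle_lt_dec l (foot a)); [left | right]; lra.
Qed.

Lemma foot_sub a1 a2 :
  foot a2 - foot a1 = dot (vsub a2 a1) (dir e) / dot (dir e) (dir e).
Proof.
  pose proof dir_sqnorm_gt0.
  unfold foot, dot, vsub in *; simpl in *; field; lra.
Qed.

Lemma angle_le_right_iff_foot a1 a2 :
  angle_le_right (vsub a2 a1) (dir e) <-> foot a1 <= foot a2.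
Proof.
  pose proof dir_sqnorm_gt0 as Hd; pose proof (foot_sub a1 a2) as Hf.
  unfold angle_le_right; split; intro H.
  - enough (0 <= foot a2 - foot a1) by lra.
    rewrite Hf; apply Rle_mult_inv_pos; lra.
  - replace (dot (vsub a2 a1) (dir e))
      with ((foot a2 - foot a1) * dot (dir e) (dir e)) by (rewrite Hf; field; lra).
    nra.
Qed.

Lemma not_after_line_point l1 l2 :
  not_after e (line_point l1) (line_point l2) <-> l1 <= l2.
Proof.
  pose proof dir_sqnorm_gt0.
  unfold not_after.
  replace (dot (vsub (line_point l2) (line_point l1)) (dir e))
    with ((l2 - l1) * dot (dir e) (dir e))
    by (unfold line_point, dot, vsub; simpl; ring).
  split; nra.
Qed.

Lemma line_meets_circle_iff a r : 0 <= r ->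
  line_meets_circle e a r <-> sqdist (line_point (foot a)) a <= r * r.
Proof.
  intro Hr; pose proof dir_sqnorm_gt0 as Hd; split.
  - intros [p [[l ->] Hp]]; fold (line_point l) in Hp.
    apply pdist_eq_iff in Hp; auto.
    rewrite <- Hp; apply sqdist_foot_le.
  - intro Hfoot.
    set (h := sqdist (line_point (foot a)) a) in *.
    (* Move from the foot by the half-chord [sqrt ((r^2 - h) / |d|^2)]. *)
    set (t := sqrt ((r * r - h) / dot (dir e) (dir e))).
    assert (Ht : t * t = (r * r - h) / dot (dir e) (dir e))
      by (apply sqrt_sqrt, Rle_mult_inv_pos; lra).
    exists (line_point (foot a + t)); split; [apply on_line_point |].
    apply pdist_eq_iff; auto.
    rewrite sqdist_line_point; fold h.
    replace (foot a + t - foot a) with t by ring.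
    rewrite Ht; field; lra.
Qed.

Lemma line_meets_circle_of_disk a r l : 0 <= r ->
  pdist (line_point l) a <= r -> line_meets_circle e a r.
Proof.
  intros Hr Hl; apply line_meets_circle_iff; auto.
  apply pdist_le_iff in Hl; auto.
  eapply Rle_trans; [apply sqdist_foot_le | exact Hl].
Qed.

Lemma line_meets_lens_of_reversed_feet a1 a2 r l1 l2 : 0 <= r ->
  l1 <= l2 -> foot a2 < foot a1 ->
  pdist (line_point l1) a1 <= r -> pdist (line_point l2) a2 <= r ->
  line_meets_lens e a1 a2 r.
Proof.
  intros Hr Hl Hfeet H1 H2; apply pdist_le_iff in H1, H2; auto.
  destruct (Rle_lt_dec l2 (foot a1)) as [Hl2 | Hl2].
  - exists (line_point l2); split; [apply on_line_point |].
    split; apply pdist_le_iff; auto.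
    eapply Rle_trans; [apply (sqdist_line_point_between a1 l1) | exact H1].
    left; lra.
  - exists (line_point (foot a1)); split; [apply on_line_point |].
    split; apply pdist_le_iff; auto.
    + eapply Rle_trans; [apply sqdist_foot_le | exact H1].
    + eapply Rle_trans; [apply (sqdist_line_point_between a2 l2) | exact H2].
      right; lra.
Qed.

Lemma monotone_of_feet a1 a2 r : 0 <= r ->
  line_meets_circle e a1 r -> line_meets_circle e a2 r ->
  angle_le_right (vsub a2 a1) (dir e) -> monotone a1 a2 e r.
Proof.
  intros Hr H1 H2 Hf.
  apply line_meets_circle_iff in H1, H2; auto.
  apply angle_le_right_iff_foot in Hf.
  exists (line_point (foot a1)), (line_point (foot a2)).
  repeat split; try apply on_line_point.
  - now apply not_after_line_point.
  - now apply pdist_le_iff.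
  - now apply pdist_le_iff.
Qed.

Lemma monotone_meets_circles_angle_or_lens a1 a2 r : 0 <= r -> monotone a1 a2 e r ->
  line_meets_circle e a1 r /\ line_meets_circle e a2 r /\
  (angle_le_right (vsub a2 a1) (dir e) \/ line_meets_lens e a1 a2 r).
Proof.
  intros Hr [p1 [p2 [[l1 ->] [[l2 ->] [Hna [H1 H2]]]]]].
  fold (line_point l1) (line_point l2) in *.
  apply (proj1 (not_after_line_point l1 l2)) in Hna.
  split; [eapply line_meets_circle_of_disk; eauto |].
  split; [eapply line_meets_circle_of_disk; eauto |].
  destruct (Rle_lt_dec (foot a1) (foot a2)) as [Hfeet | Hfeet].
  - now left; apply angle_le_right_iff_foot.
  - right; now apply (line_meets_lens_of_reversed_feet a1 a2 r l1 l2).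
Qed.

End Line.

Lemma pdist_le_of_line_meets_lens e a1 a2 r : 0 <= r ->
  line_meets_lens e a1 a2 r -> pdist a1 a2 <= 2 * r.
Proof. intros Hr [p [_ [H1 H2]]]; eapply pdist_le_of_common_disk; eauto. Qed.

Theorem mainTheorem7 (a1 a2 : pt) (e : dseg) (rho : R)
  (He : nondegenerate e) (Hrho : 0 < rho) :
  let d := line_meets_circle e a1 rho in
  let ee := line_meets_circle e a2 rho in
  let f := angle_le_right (vsub a2 a1) (dir e) in
  let g := pdist a1 a2 <= 2 * rho in
  ((d /\ ee /\ f) -> monotone a1 a2 e rho) /\
  ((~ g \/ ~ line_meets_lens e a1 a2 rho) ->
     ((d /\ ee /\ f) <-> monotone a1 a2 e rho)).
Proof.
  intros d ee f g.
  assert (Hr : 0 <= rho) by lra.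
  assert (Hdef : d /\ ee /\ f -> monotone a1 a2 e rho)
    by (intros [Hd [Hee Hf]]; now apply monotone_of_feet).
  split; [exact Hdef |].
  intro Hsep; split; [exact Hdef |].
  intro Hmono.
  destruct (monotone_meets_circles_angle_or_lens e He a1 a2 rho Hr Hmono) as [Hd [Hee [Hf | Hlens]]].
  - now repeat split.
  - exfalso; destruct Hsep as [Hg | Hg]; apply Hg; auto.
    now apply (pdist_le_of_line_meets_lens e).
Qed.
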